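(* Let $\mathbb{K}=(G,M,I)$ be a formal context. The number of meet-irreducible elements of the lattice ${\downarrow}\operatorname{Ext}(\mathbb{K})$ of all closure systems on $G$ contained in $\operatorname{Ext}(\mathbb{K})$ (ordered by inclusion) equals the number of covering pairs $A\prec B$ in the lattice $(\operatorname{Ext}(\mathbb{K}),\subseteq)$, i.e. $|\prec_{\operatorname{Ext}(\mathbb{K})}|$.
   Context: A formal context is a triple $(G,M,I)$ with finite nonempty sets $G$, $M$ and $I\subseteq G\times M$; derivations $A'=\{m\mid\forall a\in A:(a,m)\in I\}$, $B'=\{g\mid\forall b\in B:(g,b)\in I\}$. $\operatorname{Ext}(\mathbb{K})=\{A\subseteq G\mid A''=A\}$. A closure system on $G$ is a family of subsets of $G$ containing $G$ and closed under intersections. $\prec_{\operatorname{Ext}(\mathbb{K})}$ is the covering relation of $(\operatorname{Ext}(\mathbb{K}),\subseteq)$. An element $x$ of a lattice is meet-irreducible if $x\neq\top$ and $x=\bigwedge Y$ implies $x\in Y$. *)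

From mathcomp Require Import all_boot.
Set Implicit Arguments. Unset Strict Implicit. Unset Printing Implicit Defensive.

Section FCA.
Variables (G M : finType) (I : G -> M -> bool).

Definition intent (A : {set G}) : {set M} := [set m | [forall a in A, I a m]].
Definition extent (B : {set M}) : {set G} := [set g | [forall b in B, I g b]].

Definition Ext : {set {set G}} := [set A | extent (intent A) == A].

Definition closure_system (F : {set {set G}}) : bool :=
  ([set: G] \in F) &&
  [forall S : {set {set G}}, (S \subset F) ==> (\bigcap_(A in S) A \in F)].

Definition downExt (F : {set {set G}}) : bool :=
  closure_system F && (F \subset Ext).

Definition ext_covers (A B : {set G}) : bool :=
  [&& A \in Ext, B \in Ext, A \proper B &
      [forall C in Ext, ~~ ((A \proper C) && (C \proper B))]].
End FCA.

Section PosetOfSets.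
Variable T : finType.
Variable L : pred {set T}.

Definition is_meet (Y : {set {set T}}) (F : {set T}) : bool :=
  [&& L F, [forall H in Y, F \subset H] &
      [forall F', (L F' && [forall H in Y, F' \subset H]) ==> (F' \subset F)]].

Definition is_top (F : {set T}) : bool := L F && [forall H, L H ==> (H \subset F)].

Definition meet_irreducible (F : {set T}) : bool :=
  [&& L F, ~~ is_top F &
      [forall Y : {set {set T}}, ([forall H in Y, L H] && is_meet Y F) ==> (F \in Y)]].
End PosetOfSets.

(* For a covering pair A < B of extents, the extents C respecting the
   implication A -> B (A \subset C implies B \subset C) form a closure system
   below Ext whose only upper cover in the lattice is obtained by adding A;
   hence it is meet-irreducible, and the pair is recovered from it.
   Conversely, a meet-irreducible F has an extent C lying in every strictly
   larger closure system; with B the F-closure of C, the pair C < B is a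
   covering pair and F is exactly the family of extents respecting C -> B. *)
From mathcomp Require Import all_boot.
Set Implicit Arguments. Unset Strict Implicit. Unset Printing Implicit Defensive.

Section MeetIrreducible.
Variables (T : finType) (L : pred {set T}).

(* Both directions compare F with the meet of its strict upper bounds. *)
Lemma meet_irreducibleP (F : {set T}) : L F ->
  reflect (exists2 F', L F' &
             ~~ (F' \subset F) /\ forall H, L H -> F \proper H -> F' \subset H)
          (meet_irreducible L F).
Proof.
move=> LF; apply: (iffP and3P) => [[_ _ /forallP irr] | [F' LF' [F'nF F'up]]].
  set Y := [set H | L H && (F \proper H)].
  have FnY : F \notin Y by rewrite inE properxx andbF.
  have FY : [forall H in Y, F \subset H].
    by apply/forallP => H; apply/implyP; rewrite inE => /andP[_ /proper_sub].
  have : ~~ is_meet L Y F.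
    apply: contra FnY => meetF; apply: (implyP (irr Y)); rewrite meetF andbT.
    by apply/forallP => H; apply/implyP; rewrite inE => /andP[].
  rewrite /is_meet LF FY /= negb_forall => /existsP[F'].
  rewrite negb_imply => /andP[/andP[LF' /forallP F'Y] F'nF].
  exists F' => //; split=> // H LH FH.
  by apply: (implyP (F'Y H)); rewrite inE LH.
split=> //.
  by apply: contra F'nF => /andP[_ /forallP /(_ F')]; rewrite LF'.
apply/forallP => Y; apply/implyP => /andP[/forallP YL /and3P[_ FY lbY]].
apply: contraT => FnY; case/negP: F'nF.
apply: (implyP (forallP lbY F')); rewrite LF' /=.
apply/forallP => H; apply/implyP => HY.
apply: F'up; first exact: implyP (YL H) HY.
rewrite properEneq (implyP (forallP FY H) HY) andbT.
by apply: contraNneq FnY => ->.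
Qed.

End MeetIrreducible.

Section ClosureSystems.
Variable T : finType.
Implicit Types (C D : {set T}) (F S : {set {set T}}).

Lemma closure_systemP F :
  reflect ([set: T] \in F /\ forall S, S \subset F -> \bigcap_(A in S) A \in F)
          (closure_system F).
Proof.
apply: (iffP andP) => [[FT /forallP FS] | [FT FS]]; split=> //.
  by move=> S; apply/implyP.
by apply/forallP => S; apply/implyP/FS.
Qed.

Lemma closure_systemI F C D :
  closure_system F -> C \in F -> D \in F -> C :&: D \in F.
Proof.
move=> /closure_systemP[_ FS] CF DF.
have -> : C :&: D = \bigcap_(A in [set C; D]) A.
  apply/eqP; rewrite eqEsubset; apply/andP; split.
    by apply/bigcapsP => A /set2P[] ->; rewrite ?subsetIl ?subsetIr.
  by rewrite subsetI !bigcap_inf ?set21 ?set22.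
by apply: FS; apply/subsetP => A /set2P[] ->.
Qed.

Definition hull F C : {set T} := \bigcap_(D in [set D in F | C \subset D]) D.

Lemma subset_hull F C : C \subset hull F C.
Proof. by apply/bigcapsP => D; rewrite inE => /andP[]. Qed.

Lemma hull_min F C D : D \in F -> C \subset D -> hull F C \subset D.
Proof. by move=> DF CD; apply: bigcap_inf; rewrite inE DF CD. Qed.

Lemma mem_hull F C : closure_system F -> hull F C \in F.
Proof.
move=> /closure_systemP[_ FS]; apply: FS.
by apply/subsetP => D; rewrite inE => /andP[].
Qed.

End ClosureSystems.

Section Extents.
Variables (G M : finType) (I : G -> M -> bool).
Implicit Types (A B C D : {set G}) (F S : {set {set G}}).

Lemma subset_extent_intent A : A \subset extent I (intent I A).
Proof.
apply/subsetP => g gA; rewrite inE; apply/forallP => m; apply/implyP.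
by rewrite inE => /forallP/(_ g)/implyP; apply.
Qed.

Lemma intentS A B : A \subset B -> intent I B \subset intent I A.
Proof.
move=> AB; apply/subsetP => m; rewrite !inE => /forallP IBm.
apply/forallP => a; apply/implyP => aA.
by apply: (implyP (IBm a)); apply: (subsetP AB).
Qed.

Lemma extentS (X Y : {set M}) : X \subset Y -> extent I Y \subset extent I X.
Proof.
move=> XY; apply/subsetP => g; rewrite !inE => /forallP IgY.
apply/forallP => m; apply/implyP => mX.
by apply: (implyP (IgY m)); apply: (subsetP XY).
Qed.

Lemma bigcap_Ext S : S \subset Ext I -> \bigcap_(A in S) A \in Ext I.
Proof.
move=> SE; rewrite inE eqEsubset subset_extent_intent andbT.
apply/bigcapsP => A AS; have /(subsetP SE) := AS; rewrite inE => /eqP <-.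
by apply/extentS/intentS/bigcap_inf.
Qed.

Lemma closure_system_Ext : closure_system (Ext I).
Proof.
apply/closure_systemP; split; last exact: bigcap_Ext.
by have := bigcap_Ext (sub0set (Ext I)); rewrite big_set0.
Qed.

Definition Ext_resp A B := [set C in Ext I | (A \subset C) ==> (B \subset C)].

Lemma Ext_respP A B C :
  reflect (C \in Ext I /\ (A \subset C -> B \subset C)) (C \in Ext_resp A B).
Proof. by apply: (iffP setIdP) => -[CE AB]; split=> //; apply/implyP. Qed.

Lemma notin_Ext_resp A B : ~~ (B \subset A) -> A \notin Ext_resp A B.
Proof. by move=> BnA; apply/Ext_respP => -[_ /(_ (subxx A))]; apply/negP. Qed.

Lemma downExt_resp A B : downExt I (Ext_resp A B).
Proof.
apply/andP; split; last by apply/subsetP => C /Ext_respP[].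
have [ExtT _] := closure_systemP _ closure_system_Ext.
apply/closure_systemP; split.
  by apply/Ext_respP; split=> //; rewrite subsetT.
move=> S SK; apply/Ext_respP; split.
  by apply: bigcap_Ext; apply/subsetP => C /(subsetP SK)/Ext_respP[].
move=> AX; apply/bigcapsP => C CS.
have /(subsetP SK)/Ext_respP[_] := CS; apply.
exact: subset_trans AX (bigcap_inf _ CS).
Qed.

(* An intersection of members of [A |: Ext_resp A B] is either A itself or
   fails to contain A, and then respects A -> B vacuously. *)
Lemma downExt_setU1_resp A B : A \in Ext I -> downExt I (A |: Ext_resp A B).
Proof.
move=> AE; have /andP[/closure_systemP[KT KS] _] := downExt_resp A B.
have sub_Ext : A |: Ext_resp A B \subset Ext I.
  by apply/subsetP => C /setU1P[-> // | /Ext_respP[]].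
apply/andP; split=> //; apply/closure_systemP; split; first by apply: setU1r.
move=> S SF; have [AS | AnS] := boolP (A \in S).
  have XA : \bigcap_(C in S) C \subset A by apply: bigcap_inf.
  have [-> | XnA] := eqVneq (\bigcap_(C in S) C) A; first exact: setU11.
  apply/setU1r/Ext_respP; split; first exact/bigcap_Ext/(subset_trans SF).
  by move=> AX; case/eqP: XnA; apply/eqP; rewrite eqEsubset XA.
apply/setU1r/KS/subsetP => C CS.
by have /(subsetP SF)/setU1P[CA | //] := CS; rewrite -CA CS in AnS.
Qed.

Lemma ext_covers_meet_irreducible A B :
  ext_covers I A B -> meet_irreducible (downExt I) (Ext_resp A B).
Proof.
case/and4P => AE BE /andP[AB BnA] /forallP cov.
apply/(meet_irreducibleP (downExt_resp A B)).
exists (A |: Ext_resp A B); first exact: downExt_setU1_resp.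
split; first by rewrite subUset sub1set (negbTE (notin_Ext_resp BnA)).
move=> H /andP[HL HE] KH; rewrite subUset (proper_sub KH) andbT sub1set.
have [_ [C CH CnK]] := properP KH.
have CE : C \in Ext I := subsetP HE C CH.
have AC : A \subset C.
  by apply: contraNT CnK => AnC; apply/Ext_respP; split=> // /(negP AnC).
have BnC : ~~ (B \subset C) by apply: contra CnK => BC; apply/Ext_respP.
have BH : B \in H by apply: (subsetP (proper_sub KH)); apply/Ext_respP.
have CBH : C :&: B \in H := closure_systemI HL CH BH.
have ACB : A \subset C :&: B by rewrite subsetI AC.
have CBB : C :&: B \proper B.
  rewrite properEneq subsetIr andbT.
  by apply: contraNneq BnC => <-; apply: subsetIl.
have [-> // | AnCB] := eqVneq A (C :&: B).
by have := cov (C :&: B); rewrite (subsetP HE _ CBH) CBB properEneq AnCB ACB.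
Qed.

Section MeetIrreducibleFamily.
Variables (F : {set {set G}}) (C : {set G}).
Hypothesis FL : downExt I F.

Let B := hull F C.

Lemma sub_Ext_resp_hull D : D \subset B -> F \subset Ext_resp C D.
Proof.
move=> DB; have /andP[_ FE] := FL; apply/subsetP => E EF; apply/Ext_respP.
split; first exact: (subsetP FE).
by move=> CsubE; apply: subset_trans DB (hull_min EF CsubE).
Qed.

Hypotheses (CE : C \in Ext I) (CnF : C \notin F)
  (C_up : forall H, downExt I H -> F \proper H -> C \in H).

Lemma Ext_resp_hull_or_sub D : D \in Ext I -> D \subset B ->
  F = Ext_resp C D \/ D \subset C.
Proof.
move=> DE DB; have FK := sub_Ext_resp_hull DB.
have [<- | FnK] := eqVneq F (Ext_resp C D); [by left | right].
have FpK : F \proper Ext_resp C D by rewrite properEneq FnK.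
by have /Ext_respP[_] := C_up (downExt_resp C D) FpK; apply.
Qed.

Lemma ext_covers_hull : ext_covers I C B /\ F = Ext_resp C B.
Proof.
have /andP[FC FE] := FL.
have BF : B \in F := mem_hull C FC.
have BE : B \in Ext I := subsetP FE B BF.
have CB : C \proper B.
  by rewrite properEneq subset_hull andbT; apply: contraNneq CnF => ->.
have [FK | BC] := Ext_resp_hull_or_sub BE (subxx B); last first.
  by move: CB; rewrite properE BC andbF.
split=> //; apply/and4P; split=> //; apply/forallP => D; apply/implyP => DE.
apply/negP => /andP[CD DB].
have [FD | DC] := Ext_resp_hull_or_sub DE (proper_sub DB); last first.
  by move: CD; rewrite properE DC andbF.
have DF : D \in F by rewrite FD; apply/Ext_respP.
by move: DB; rewrite properE (hull_min DF (proper_sub CD)) andbF.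
Qed.

End MeetIrreducibleFamily.

Lemma meet_irreducible_ext_covers F : meet_irreducible (downExt I) F ->
  exists A B, ext_covers I A B /\ F = Ext_resp A B.
Proof.
move=> FMI; have FL : downExt I F by case/and3P: FMI.
have [F' /andP[_ F'E] [F'nF F'up]] := meet_irreducibleP FL FMI.
have [C CF' CnF] := subsetPn F'nF.
have C_up H : downExt I H -> F \proper H -> C \in H.
  by move=> HL FH; apply: (subsetP (F'up H HL FH)).
exists C, (hull F C).
exact: ext_covers_hull FL (subsetP F'E C CF') CnF C_up.
Qed.

Lemma Ext_resp_inj A B A' B' :
  ext_covers I A B -> ext_covers I A' B' ->
  Ext_resp A B = Ext_resp A' B' -> (A, B) = (A', B').
Proof.
suff sub A1 B1 A2 B2 : ext_covers I A1 B1 ->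
    Ext_resp A1 B1 = Ext_resp A2 B2 -> A2 \subset A1 /\ B2 \subset B1.
  move=> cov cov' e; have [A'A B'B] := sub _ _ _ _ cov e.
  have [AA' BB'] := sub _ _ _ _ cov' (esym e).
  by congr pair; apply/eqP; rewrite eqEsubset ?A'A ?B'B ?AA' ?BB'.
case/and4P => A1E B1E /andP[A1B1 B1nA1] _ e.
have A2A1 : A2 \subset A1.
  apply: contraNT (notin_Ext_resp B1nA1) => A2nA1.
  by rewrite e; apply/Ext_respP; split=> // /(negP A2nA1).
split=> //.
have /Ext_respP[_] : B1 \in Ext_resp A2 B2 by rewrite -e; apply/Ext_respP.
by apply; apply: subset_trans A2A1 A1B1.
Qed.

End Extents.

Theorem proposition6 (G M : finType) (I : G -> M -> bool)
  (hG : 0 < #|G|) (hM : 0 < #|M|) :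
  #|[set F : {set {set G}} | meet_irreducible (downExt I) F]| =
  #|[set p : {set G} * {set G} | ext_covers I p.1 p.2]|.
Proof.
set covers := [set p : {set G} * {set G} | ext_covers I p.1 p.2].
have -> : [set F | meet_irreducible (downExt I) F] =
          [set Ext_resp I p.1 p.2 | p in covers].
  apply/setP => F; rewrite inE; apply/idP/imsetP.
    case/meet_irreducible_ext_covers => A [B [cov ->]].
    by exists (A, B); rewrite ?inE.
  by case=> -[A B]; rewrite inE => cov ->; apply: ext_covers_meet_irreducible.
apply: card_in_imset => -[A B] [A' B']; rewrite !inE.
exact: Ext_resp_inj.
Qed.
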